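(* Let $E_t$ be the set of the first $m_t$ edges of a temporal graph stream, $M$ a temporal motif with $3$ edges, $\delta\ge0$, $q\in(0,1]$, and $r$ an integer with $1\le r\le m_t$. Let $\widehat E_t$ be a uniformly random $r$-element subset of $E_t$, let $(\omega_{e,g})_{e\in E_t,g\in E(e)}$ be independent Bernoulli($q$) variables independent of $\widehat E_t$, and let $$\widehat C_{M,t}=\frac{m_t}{rq}\sum_{e\in\widehat E_t}\sum_{g\in E(e)}\omega_{e,g}\,\eta(W_{e,g}).$$ Then $\mathrm{Var}[\widehat C_{M,t}]\le\frac{m_t-rq}{rq}\,C_{M,t}^2$.
   Context: A temporal graph stream is a sequence of temporal edges $(u,v,t)$ (directed edge from vertex $u$ to vertex $v$ with timestamp $t\in\mathbb{R}^+$, timestamps pairwise distinct) arriving in increasing order of timestamp; $E_t$ is the set of the $m_t$ edges with timestamp at most $t$. A temporal motif $M$ is an ordered sequence of $l$ directed edges $\langle e'_1=(u'_1,v'_1),\dots,e'_l=(u'_l,v'_l)\rangle$ on a vertex set $V_M$ whose underlying graph is connected; here $l=3$. A sequence $\langle (w_1,x_1,t_1),\dots,(w_l,x_l,t_l)\rangle$ of edges with $t_1<\dots<t_l$ is a $\delta$-instance of $M$ if there is a bijection $f$ from its vertices to $V_M$ with $f(w_i)=u'_i$, $f(x_i)=v'_i$ for all $i$, and $t_l-t_1\le\delta$. $C_{M,t}$ is the number of $\delta$-instances of $M$ among the edges of $E_t$. For $e\in E_t$, $\eta(e)$ denotes the number of $\delta$-instances of $M$ whose last (third) edge is $e$. Wedge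 data: for each edge $e$ there is a finite set $E(e)$ of earlier edges and for each $g\in E(e)$ a nonnegative integer $\eta(W_{e,g})$ (the number of $\delta$-instances of $M$ containing the temporal wedge formed by $e$ and $g$, with $e$ mapped to $e'_3$), such that $\sum_{g\in E(e)}\eta(W_{e,g})=\eta(e)$. *)

From HB Require Import structures.
From mathcomp Require Import all_boot all_order all_algebra.
From mathcomp Require Import boolp.
Set Implicit Arguments. Unset Strict Implicit. Unset Printing Implicit Defensive.
Import Order.TTheory GRing.Theory Num.Theory.
Local Open Scope ring_scope.

(* Temporal edges of E_t: indexed by 'I_m, edge i = (src i, dst i, time i).
   Temporal motif with 3 edges: (mu k, mv k), k : 'I_3, on vertex type VM;
   V_M is the set of endpoints of these edges. *)

Definition motif_adj (VM : finType) (mu mv : 'I_3 -> VM) : rel VM :=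
  fun a b => [exists k : 'I_3, ((mu k == a) && (mv k == b)) || ((mu k == b) && (mv k == a))].

Definition motif_connected (VM : finType) (mu mv : 'I_3 -> VM) : Prop :=
  forall k l : 'I_3, connect (motif_adj mu mv) (mu k) (mu l).

Definition is_delta_instance (R : realDomainType) (V : eqType) (VM : finType)
  (m : nat) (src dst : 'I_m -> V) (time : 'I_m -> R)
  (mu mv : 'I_3 -> VM) (delta : R) (s : {ffun 'I_3 -> 'I_m}) : Prop :=
  (forall i j : 'I_3, (i < j)%N -> time (s i) < time (s j)) /\
  time (s ord_max) - time (s ord0) <= delta /\
  exists f : V -> VM,
    (forall k : 'I_3, f (src (s k)) = mu k /\ f (dst (s k)) = mv k) /\
    (forall a b : V,
        (exists k : 'I_3, a = src (s k) \/ a = dst (s k)) ->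
        (exists k : 'I_3, b = src (s k) \/ b = dst (s k)) ->
        f a = f b -> a = b).

Definition motif_count (R : realDomainType) (V : eqType) (VM : finType)
  (m : nat) (src dst : 'I_m -> V) (time : 'I_m -> R)
  (mu mv : 'I_3 -> VM) (delta : R) : nat :=
  #|[set s : {ffun 'I_3 -> 'I_m} | `[< is_delta_instance src dst time mu mv delta s >] ]|.

Definition eta_last (R : realDomainType) (V : eqType) (VM : finType)
  (m : nat) (src dst : 'I_m -> V) (time : 'I_m -> R)
  (mu mv : 'I_3 -> VM) (delta : R) (e : 'I_m) : nat :=
  #|[set s : {ffun 'I_3 -> 'I_m} |
      `[< is_delta_instance src dst time mu mv delta s >] && (s ord_max == e)]|.

(* Finite probability space: a random subset hatE of E_t together with a
   family omega of Bernoulli variables indexed by pairs (e,g)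
   (only pairs with g in E(e) are used; the others are independent extras). *)
Definition outcome (m : nat) : finType :=
  ({set 'I_m} * {ffun ('I_m * 'I_m) -> bool})%type.

Definition prob (R : realFieldType) (m r : nat) (q : R) (o : outcome m) : R :=
  ((#|o.1| == r)%:R / ('C(m, r))%:R) *
  \prod_(p : 'I_m * 'I_m) (if o.2 p then q else 1 - q).

Definition expect (R : realFieldType) (m r : nat) (q : R) (X : outcome m -> R) : R :=
  \sum_(o : outcome m) prob r q o * X o.

Definition variance (R : realFieldType) (m r : nat) (q : R) (X : outcome m -> R) : R :=
  expect r q (fun o => (X o - expect r q X) ^+ 2).

Definition estimator (R : realFieldType) (m r : nat) (q : R)
  (Eset : 'I_m -> {set 'I_m}) (etaW : 'I_m -> 'I_m -> nat) (o : outcome m) : R :=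
  (m%:R / (r%:R * q)) *
  \sum_(e in o.1) \sum_(g in Eset e) (o.2 (e, g))%:R * (etaW e g)%:R.

From HB Require Import structures.
From mathcomp Require Import all_boot all_order all_algebra all_fingroup.
From mathcomp Require Import ring.
Import Order.TTheory GRing.Theory Num.Theory.
Local Open Scope ring_scope.
Set Implicit Arguments. Unset Strict Implicit.

(* Let K := m / (r q) and Z_{e,g} := [e \in hatE] * omega_{e,g}, so that the
   estimator reads X = K * sum_e sum_{g in E(e)} eta(W_{e,g}) Z_{e,g}.  The
   proof is the elementary bound for a bounded nonnegative random variable:
   if 0 <= X <= b then Var X = E[X^2] - E[X]^2 <= b E[X] - E[X]^2.
   - A uniform r-subset contains a fixed edge with probability r/m (by
     symmetry under transpositions of edges) and omega_{e,g} is an independent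
     Bernoulli(q) variable, so E[Z_{e,g}] = r q / m and the estimator is
     unbiased: E[X] = sum_{e,g} eta(W_{e,g}) = C, the last equality because
     every delta-instance has exactly one last edge.
   - Since 0 <= Z_{e,g} <= 1, we have 0 <= X <= K C. *)

Lemma bounded_variance_le (R : realFieldType) (T : finType) (w X : T -> R) (b : R) :
  (forall t, 0 <= w t) -> \sum_t w t = 1 ->
  (forall t, 0 <= X t) -> (forall t, X t <= b) ->
  let mean := \sum_t w t * X t in
  \sum_t w t * (X t - mean) ^+ 2 <= (b - mean) * mean.
Proof.
move=> w_ge0 w_sum1 X_ge0 X_leb /=; set mean := \sum_t w t * X t.
have -> : \sum_t w t * (X t - mean) ^+ 2 = \sum_t w t * X t ^+ 2 - mean ^+ 2.
  transitivity (\sum_t (w t * X t ^+ 2 - (2 * mean) * (w t * X t) + mean ^+ 2 * w t)).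
    by apply: eq_bigr => t _; ring.
  by rewrite big_split sumrB /= -!big_distrr /= w_sum1 -/mean; ring.
have second_moment : \sum_t w t * X t ^+ 2 <= b * mean.
  rewrite /mean big_distrr /=; apply: ler_sum => t _.
  by rewrite expr2 mulrCA ler_wpM2r ?mulr_ge0.
by rewrite mulrBl -expr2 lerD2r.
Qed.

Lemma sum_indicator (R : pzSemiRingType) (T : finType) (P : pred T) :
  \sum_x ((P x)%:R : R) = #|[set x | P x]|%:R.
Proof.
rewrite -sum1dep_card natr_sum [RHS]big_mkcond.
by apply: eq_bigr => x _; case: (P x).
Qed.

Section SamplingSpace.
Variables (R : realFieldType) (m r : nat) (q : R).

Definition subset_weight (S : {set 'I_m}) : R := (#|S| == r)%:R / ('C(m, r))%:R.

Definition bernoulli_weight (w : {ffun 'I_m * 'I_m -> bool}) : R :=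
  \prod_(p : 'I_m * 'I_m) (if w p then q else 1 - q).

Lemma expect_product (F : {set 'I_m} -> R) (G : {ffun 'I_m * 'I_m -> bool} -> R) :
  expect r q (fun o => F o.1 * G o.2) =
  (\sum_S subset_weight S * F S) * (\sum_w bernoulli_weight w * G w).
Proof.
rewrite /expect -(pair_big xpredT xpredT
  (fun S w => prob r q (S, w) * (F (S, w).1 * G (S, w).2))) /= big_distrl /=.
apply: eq_bigr => S _; rewrite big_distrr /=; apply: eq_bigr => w _.
by rewrite /prob /subset_weight /bernoulli_weight /=; ring.
Qed.

Lemma expect_ext (X Y : outcome m -> R) :
  (forall o, X o = Y o) -> expect r q X = expect r q Y.
Proof. by move=> XY; apply: eq_bigr => o _; rewrite XY. Qed.

Lemma expectZ (c : R) (F : outcome m -> R) :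
  expect r q (fun o => c * F o) = c * expect r q F.
Proof. by rewrite /expect big_distrr; apply: eq_bigr => o _; rewrite mulrCA. Qed.

Lemma expect_sum (I : finType) (P : pred I) (F : I -> outcome m -> R) :
  expect r q (fun o => \sum_(i | P i) F i o) = \sum_(i | P i) expect r q (F i).
Proof. by rewrite /expect exchange_big /=; apply: eq_bigr => o _; rewrite big_distrr. Qed.

Lemma prob_ge0 (o : outcome m) : 0 <= q -> q <= 1 -> 0 <= prob r q o.
Proof.
move=> q_ge0 q_le1; apply: mulr_ge0; first by rewrite divr_ge0.
by apply: prodr_ge0 => p _; case: (o.2 p); rewrite ?subr_ge0.
Qed.

(* There are 'C(m, r) subsets of size r, so the subset law has mass one. *)
Lemma subset_mass1 : (r <= m)%N -> \sum_S subset_weight S = 1.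
Proof.
move=> r_lem; rewrite /subset_weight -big_distrl /= sum_indicator card_draws.
by rewrite card_ord divff // pnatr_eq0 -lt0n bin_gt0.
Qed.

Lemma bernoulli_all_ones (P : {set 'I_m * 'I_m}) :
  \sum_w bernoulli_weight w * \prod_(x in P) ((w x)%:R : R) = q ^+ #|P|.
Proof.
transitivity (\prod_(x : 'I_m * 'I_m) \sum_(b : bool)
   ((if b then q else 1 - q) * (if x \in P then (b%:R : R) else 1))).
  rewrite bigA_distr_bigA /=; apply: eq_bigr => w _.
  rewrite /bernoulli_weight [X in _ * X]big_mkcond /= -big_split /=.
  by apply: eq_bigr => x _; case: (x \in P).
rewrite -prodr_const [RHS]big_mkcond /=; apply: eq_bigr => x _.
by rewrite big_bool /=; case: (x \in P) => /=; ring.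
Qed.

(* Outcomes form a probability space: the product of the two marginal masses. *)
Lemma prob_mass1 : (r <= m)%N -> \sum_(o : outcome m) prob r q o = 1.
Proof.
move=> r_lem.
have bernoulli_total : \sum_w bernoulli_weight w * 1 = 1.
  have := bernoulli_all_ones set0; rewrite cards0 expr0; apply: etrans.
  by apply: eq_bigr => w _; rewrite big_set0.
have subset_total : \sum_S subset_weight S * 1 = 1.
  by rewrite -[RHS](subset_mass1 r_lem); apply: eq_bigr => S _; rewrite mulr1.
have := expect_product (fun _ => 1) (fun _ => 1).
rewrite bernoulli_total subset_total mulr1; apply: etrans.
by apply: eq_bigr => o _; rewrite mulr1.
Qed.

(* A uniform r-subset contains a given edge with probability r/m: all edges
   play symmetric roles and the expected size of the subset is r. *)
Lemma subset_inclusion_prob (e : 'I_m) : (r <= m)%N ->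
  \sum_S subset_weight S * ((e \in S)%:R : R) = r%:R / m%:R.
Proof.
move=> r_lem.
pose incl (e : 'I_m) := \sum_S subset_weight S * ((e \in S)%:R : R).
have incl_sym e1 e2 : incl e1 = incl e2.
  rewrite /incl (reindex_inj (imset_inj (@perm_inj _ (tperm e1 e2)))) /=.
  apply: eq_bigr => S _; rewrite /subset_weight card_imset; last exact: perm_inj.
  by rewrite -{1}(tpermR e1 e2) mem_imset //; exact: perm_inj.
have incl_total : \sum_(e' : 'I_m) incl e' = r%:R.
  rewrite /incl exchange_big /=.
  transitivity (\sum_S subset_weight S * r%:R).
    apply: eq_bigr => S _; rewrite -big_distrr /= sum_indicator.
    have -> : #|[set x | x \in S]| = #|S| by apply: eq_card => x; rewrite inE.
    by rewrite /subset_weight; case: eqP => [->|_]; rewrite ?mul0r.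
  by rewrite -big_distrl /= subset_mass1 // mul1r.
have m_gt0 : (0 < m)%N := leq_ltn_trans (leq0n e) (ltn_ord e).
move: incl_total; rewrite (eq_bigr (fun _ => incl e)) => [|e' _]; last exact: incl_sym.
rewrite sumr_const card_ord => <-.
by rewrite -[X in X / _]mulr_natr mulfK // pnatr_eq0 -lt0n.
Qed.

Definition sample_indicator (o : outcome m) (e g : 'I_m) : R :=
  (e \in o.1)%:R * (o.2 (e, g))%:R.

(* By independence, E[Z_{e,g}] = P(e sampled) * P(omega_{e,g} = 1). *)
Lemma expect_sample_indicator (e g : 'I_m) : (r <= m)%N ->
  expect r q (fun o => sample_indicator o e g) = r%:R / m%:R * q.
Proof.
move=> r_lem; rewrite (expect_product (fun S => ((e \in S)%:R : R))
  (fun w => (w (e, g))%:R)) subset_inclusion_prob //.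
have := bernoulli_all_ones [set (e, g)]; rewrite cards1 expr1 => <-.
by congr (_ * _); apply: eq_bigr => w _; rewrite big_set1.
Qed.

Lemma sample_indicator_ge0 o e g : 0 <= sample_indicator o e g.
Proof. by rewrite mulr_ge0. Qed.

Lemma sample_indicator_le1 o e g : sample_indicator o e g <= 1.
Proof. by rewrite mulr_ile1 ?ler0n ?lern1 ?leq_b1. Qed.

Variables (Eset : 'I_m -> {set 'I_m}) (etaW : 'I_m -> 'I_m -> nat).

(* The sum of the wedge counts, equal to C_{M,t} by the wedge decomposition. *)
Definition wedge_total : R := \sum_e \sum_(g in Eset e) (etaW e g)%:R.

Lemma estimator_expansion o :
  estimator r q Eset etaW o =
  m%:R / (r%:R * q) * \sum_e \sum_(g in Eset e) (etaW e g)%:R * sample_indicator o e g.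
Proof.
rewrite /estimator big_mkcond /=; congr (_ * _); apply: eq_bigr => e _.
rewrite /sample_indicator; case: (e \in o.1) => /=.
  by apply: eq_bigr => g _; rewrite mul1r mulrC.
by rewrite big1 // => g _; rewrite mul0r mulr0.
Qed.

Hypotheses (q_gt0 : 0 < q) (r_ge1 : (1 <= r)%N) (r_lem : (r <= m)%N).

(* Since E[Z_{e,g}] = r q / m exactly compensates the scaling K = m / (r q),
   the estimator is unbiased for the wedge total. *)
Lemma estimator_unbiased : expect r q (estimator r q Eset etaW) = wedge_total.
Proof.
have m_neq0 : (m%:R : R) != 0 by rewrite pnatr_eq0 -lt0n (leq_trans r_ge1).
have r_neq0 : (r%:R : R) != 0 by rewrite pnatr_eq0 -lt0n.
have q_neq0 : q != 0 by rewrite gt_eqF.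
rewrite (expect_ext estimator_expansion) expectZ expect_sum /wedge_total.
rewrite big_distrr /=; apply: eq_bigr => e _.
rewrite expect_sum big_distrr /=; apply: eq_bigr => g _.
rewrite expectZ expect_sample_indicator //; field.
by rewrite m_neq0 r_neq0 q_neq0.
Qed.

Lemma scale_ge0 : 0 <= m%:R / (r%:R * q).
Proof. by rewrite divr_ge0 ?mulr_ge0 ?ler0n ?ltW. Qed.

Lemma estimator_ge0 o : 0 <= estimator r q Eset etaW o.
Proof.
rewrite estimator_expansion; apply: mulr_ge0; first exact: scale_ge0.
by do 2 (apply: sumr_ge0 => ? _); rewrite mulr_ge0 ?sample_indicator_ge0.
Qed.

Lemma estimator_le o : estimator r q Eset etaW o <= m%:R / (r%:R * q) * wedge_total.
Proof.
rewrite estimator_expansion; apply: ler_wpM2l; first exact: scale_ge0.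
by do 2 (apply: ler_sum => ? _); rewrite ler_piMr ?sample_indicator_le1.
Qed.

Lemma estimator_variance_le : q <= 1 ->
  variance r q (estimator r q Eset etaW)
    <= (m%:R - r%:R * q) / (r%:R * q) * wedge_total ^+ 2.
Proof.
move=> q_le1.
have r_neq0 : (r%:R : R) != 0 by rewrite pnatr_eq0 -lt0n.
have := bounded_variance_le (fun o => prob_ge0 o (ltW q_gt0) q_le1)
  (prob_mass1 r_lem) estimator_ge0 estimator_le.
rewrite -/(expect _ _ _) estimator_unbiased /= => variance_le.
have -> : (m%:R - r%:R * q) / (r%:R * q) * wedge_total ^+ 2
          = (m%:R / (r%:R * q) * wedge_total - wedge_total) * wedge_total.
  by field; rewrite r_neq0 gt_eqF.
rewrite /variance estimator_unbiased; exact: variance_le.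
Qed.

End SamplingSpace.

(* Every delta-instance is counted once, at its last edge. *)
Lemma motif_count_by_last_edge (R : realDomainType) (V : eqType) (VM : finType)
  (m : nat) (src dst : 'I_m -> V) (time : 'I_m -> R) (mu mv : 'I_3 -> VM) (delta : R) :
  motif_count src dst time mu mv delta =
  (\sum_e eta_last src dst time mu mv delta e)%N.
Proof.
rewrite /motif_count /eta_last -sum1_card.
rewrite (partition_big (fun s : {ffun 'I_3 -> 'I_m} => s ord_max) xpredT) //=.
by apply: eq_bigr => e _; rewrite -sum1_card; apply: eq_bigl => s; rewrite !inE.
Qed.

Theorem theorem8 (R : realFieldType) (V : eqType) (VM : finType) (m : nat)
  (src dst : 'I_m -> V) (time : 'I_m -> R)
  (mu mv : 'I_3 -> VM) (delta q : R) (r : nat)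
  (Eset : 'I_m -> {set 'I_m}) (etaW : 'I_m -> 'I_m -> nat) :
  (forall e, 0 < time e) ->
  injective time ->
  motif_connected mu mv ->
  0 <= delta ->
  0 < q -> q <= 1 ->
  (1 <= r)%N -> (r <= m)%N ->
  (forall e g, g \in Eset e -> time g < time e) ->
  (forall e, (\sum_(g in Eset e) etaW e g)%N = eta_last src dst time mu mv delta e) ->
  variance r q (estimator r q Eset etaW)
    <= (m%:R - r%:R * q) / (r%:R * q)
       * ((motif_count src dst time mu mv delta)%:R) ^+ 2.
Proof.
move=> _ _ _ _ q_gt0 q_le1 r_ge1 r_lem _ eta_split.
have -> : (motif_count src dst time mu mv delta)%:R = wedge_total R Eset etaW.
  rewrite motif_count_by_last_edge natr_sum; apply: eq_bigr => e _.
  by rewrite -eta_split natr_sum.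
exact: estimator_variance_le.
Qed.
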